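(* Let $n\ge0$. For all $x,y\in Q_n$ we have $L_{x,y}=R_{x,y}$ as permutations of $Q_n$.
   Context: Cayley--Dickson loops: $Q_0=\{1,-1\}\subset\mathbb{R}$ with conjugation $x^*=x$. For $n\ge1$, $Q_n=\{(x,0),(x,1)\mid x\in Q_{n-1}\}$ with multiplication $(x,0)(y,0)=(xy,0)$, $(x,0)(y,1)=(yx,1)$, $(x,1)(y,0)=(xy^*,1)$, $(x,1)(y,1)=(-y^*x,0)$ and conjugation $(x,0)^*=(x^*,0)$, $(x,1)^*=(-x,1)$, where $-(x,a)=(-x,a)$. $Q_n$ is a loop with neutral element $1=(1,0,\dots,0)$. Translations $L_x(a)=xa$, $R_x(a)=ax$; $L_{x,y}=L_{yx}^{-1}L_yL_x$ and $R_{x,y}=R_{xy}^{-1}R_yR_x$. *)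

From mathcomp Require Import all_boot.
Set Implicit Arguments. Unset Strict Implicit. Unset Printing Implicit Defensive.

(* Carrier of Q_n.  Q_0 = {1,-1} is encoded by bool (false = 1, true = -1);
   Q_(n+1) = Q_n x {0,1} with pairs (x, a), a : bool (false = 0, true = 1). *)
Fixpoint Q (n : nat) : finType :=
  match n with
  | 0 => bool
  | n'.+1 => (Q n' * bool)%type
  end.

Fixpoint qone (n : nat) : Q n :=
  match n return Q n with
  | 0 => false
  | n'.+1 => (qone n', false)
  end.

Fixpoint qneg (n : nat) : Q n -> Q n :=
  match n return Q n -> Q n with
  | 0 => fun x => ~~ x
  | n'.+1 => fun x => (qneg x.1, x.2)
  end.

Fixpoint qconj (n : nat) : Q n -> Q n :=
  match n return Q n -> Q n with
  | 0 => fun x => x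
  | n'.+1 => fun x => if x.2 then (qneg x.1, true) else (qconj x.1, false)
  end.

Fixpoint qmul (n : nat) : Q n -> Q n -> Q n :=
  match n return Q n -> Q n -> Q n with
  | 0 => fun x y => addb x y   (* sign multiplication in {1,-1} *)
  | n'.+1 => fun x y =>
      match x.2, y.2 with
      | false, false => (qmul x.1 y.1, false)
      | false, true  => (qmul y.1 x.1, true)
      | true,  false => (qmul x.1 (qconj y.1), true)
      | true,  true  => (qneg (qmul (qconj y.1) x.1), false)
      end
  end.

(* Inverse of a map on a finite type (meaningful for bijections, such as the
   translations of the loop Q_n): finv_fin f c is some b with f b = c,
   or c itself if no such b exists. *)
Definition finv_fin (T : finType) (f : T -> T) (c : T) : T :=
  odflt c [pick b | f b == c].

Definition Lt (n : nat) (x : Q n) : Q n -> Q n := fun a => qmul x a.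
Definition Rt (n : nat) (x : Q n) : Q n -> Q n := fun a => qmul a x.

(* L_{x,y} = L_{yx}^{-1} L_y L_x  and  R_{x,y} = R_{xy}^{-1} R_y R_x *)
Definition Lxy (n : nat) (x y : Q n) : Q n -> Q n :=
  fun a => finv_fin (Lt (qmul y x)) (Lt y (Lt x a)).
Definition Rxy (n : nat) (x y : Q n) : Q n -> Q n :=
  fun a => finv_fin (Rt (qmul x y)) (Rt y (Rt x a)).

(* Both L_{x,y} and R_{x,y} act on Q_n as multiplication by a sign.

   Up to sign, Q_n multiplies like the elementary abelian group (Z/2)^n: the
   "absolute value" |.| forgetting all signs sends products to bitwise xors.
   Hence (ax)y = s * a(xy) for a sign s = s(a,x,y) (lemma [assoc_sign]), and,
   since -z <> z, both translations are injective.  Conjugation is an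
   involutive anti-automorphism with z^* = +-z; applying it to the first
   identity gives y(xa) = s * (yx)a with the same sign s ([assoc_sign_rev]).
   Therefore R_{xy}^{-1}((ax)y) = s * a = L_{yx}^{-1}(y(xa)), which is the
   theorem. *)
From mathcomp Require Import all_boot.
Set Implicit Arguments. Unset Strict Implicit. Unset Printing Implicit Defensive.

Definition qsgn (n : nat) (s : bool) (x : Q n) : Q n := if s then qneg x else x.

Lemma qnegK (n : nat) (x : Q n) : qneg (qneg x) = x.
Proof. by elim: n x => [|n IH] /= [] //= x b; rewrite IH. Qed.

Lemma qneg_neq (n : nat) (x : Q n) : qneg x != x.
Proof.
elim: n x => [|n IH] /=; first by case.
by move=> [x b]; rewrite xpair_eqE negb_and IH.
Qed.

Lemma qsgnD (n : nat) (s t : bool) (x : Q n) : qsgn s (qsgn t x) = qsgn (s (+) t) x.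
Proof. by case: s; case: t => //=; rewrite qnegK. Qed.

Lemma qconjN (n : nat) (x : Q n) : qconj (qneg x) = qneg (qconj x).
Proof. by elim: n x => [|n IH] //= [x []] /=; rewrite ?IH. Qed.

(* Signs can be pulled out of both factors of a product (the two statements
   depend on each other in the recursion, hence are proved jointly). *)
Lemma qmulN (n : nat) (x y : Q n) :
  qmul (qneg x) y = qneg (qmul x y) /\ qmul x (qneg y) = qneg (qmul x y).
Proof.
elim: n x y => [|n IH] /=; first by do 2!case.
move=> [x a] [y b]; have IHl u v := proj1 (IH u v); have IHr u v := proj2 (IH u v).
by case: a; case: b => /=; rewrite ?qconjN ?IHl ?IHr.
Qed.

Lemma qmulNl (n : nat) (x y : Q n) : qmul (qneg x) y = qneg (qmul x y).
Proof. exact: (proj1 (qmulN x y)). Qed.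

Lemma qmulNr (n : nat) (x y : Q n) : qmul x (qneg y) = qneg (qmul x y).
Proof. exact: (proj2 (qmulN x y)). Qed.

Lemma qmul_sgnl (n : nat) (s : bool) (x y : Q n) :
  qmul (qsgn s x) y = qsgn s (qmul x y).
Proof. by case: s => //=; rewrite qmulNl. Qed.

Lemma qmul_sgnr (n : nat) (s : bool) (x y : Q n) :
  qmul x (qsgn s y) = qsgn s (qmul x y).
Proof. by case: s => //=; rewrite qmulNr. Qed.

Lemma qconj_sgn (n : nat) (s : bool) (x : Q n) : qconj (qsgn s x) = qsgn s (qconj x).
Proof. by case: s => //=; rewrite qconjN. Qed.

Lemma qconjK (n : nat) (x : Q n) : qconj (qconj x) = x.
Proof. by elim: n x => [|n IH] //= [x []] /=; rewrite ?qconjN ?IH ?qnegK. Qed.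

Lemma qconj_inj (n : nat) : injective (@qconj n).
Proof. exact: can_inj (@qconjK n). Qed.

Lemma qconjM (n : nat) (x y : Q n) : qconj (qmul x y) = qmul (qconj y) (qconj x).
Proof.
elim: n x y => [|n IH] /=; first by move=> x y; rewrite addbC.
move=> [x []] [y []] /=;
  by rewrite ?qconjN ?IH ?qconjK ?qmulNl ?qmulNr ?qnegK.
Qed.

(* The absolute value |x| in (Z/2)^n, encoded in Q_n as the representative
   with all signs erased, and the group law of (Z/2)^n (bitwise xor). *)
Fixpoint qabs (n : nat) : Q n -> Q n :=
  match n return Q n -> Q n with
  | 0 => fun _ => false
  | n'.+1 => fun x => (qabs x.1, x.2)
  end.

Fixpoint qxor (n : nat) : Q n -> Q n -> Q n :=
  match n return Q n -> Q n -> Q n with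
  | 0 => fun _ _ => false
  | n'.+1 => fun x y => (qxor x.1 y.1, x.2 (+) y.2)
  end.

Lemma qxorC (n : nat) (x y : Q n) : qxor x y = qxor y x.
Proof. by elim: n x y => [|n IH] //= x y; rewrite IH addbC. Qed.

Lemma qxorA (n : nat) (x y z : Q n) : qxor x (qxor y z) = qxor (qxor x y) z.
Proof. by elim: n x y z => [|n IH] //= x y z; rewrite IH addbA. Qed.

(* Cancellation in (Z/2)^n (on Q_0 the xor is constant, hence absolute values). *)
Lemma qxor_absI (n : nat) (u y z : Q n) :
  qxor u (qabs y) = qxor u (qabs z) -> qabs y = qabs z.
Proof. by elim: n u y z => [|n IH] //= [u a] [y b] [z c] [/IH -> /addbI ->]. Qed.

Lemma qabs_sgn (n : nat) (s : bool) (x : Q n) : qabs (qsgn s x) = qabs x.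
Proof. by case: s => //; elim: n x => [|n IH] //= [x b]; rewrite IH. Qed.

Lemma qabsC (n : nat) (x : Q n) : qabs (qconj x) = qabs x.
Proof.
elim: n x => [|n IH] //= [x []] /=; last by rewrite IH.
by rewrite (qabs_sgn true).
Qed.

Lemma qabsM (n : nat) (x y : Q n) : qabs (qmul x y) = qxor (qabs x) (qabs y).
Proof.
elim: n x y => [|n IH] //= [x []] [y []] /=;
  by rewrite ?(qabs_sgn true) IH ?qabsC // qxorC.
Qed.

Lemma qabs_eq_sgn (n : nat) (x y : Q n) : qabs x = qabs y -> exists s, x = qsgn s y.
Proof.
elim: n x y => [|n IH] /=; first by move=> x y _; exists (x (+) y); case: x; case: y.
move=> [x a] [y b] [/IH [s ->] /= ->]; exists s; by case: s.
Qed.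

Lemma qconj_sgnE (n : nat) (x : Q n) : exists e, qconj x = qsgn e x.
Proof. by apply: qabs_eq_sgn; rewrite qabsC. Qed.

Lemma sgn_cancel (n : nat) (s : bool) (z : Q n) : z = qsgn s z -> s = false.
Proof. by case: s => //= /eqP; rewrite eq_sym (negbTE (qneg_neq z)). Qed.

(* Translations are injective: equal products with a common factor force the
   other factors to agree up to sign (absolute values), and the sign is then
   killed by [sgn_cancel]. *)
Lemma Lt_inj (n : nat) (x : Q n) : injective (Lt x).
Proof.
move=> a b; rewrite /Lt => eq_xab.
have /qabs_eq_sgn [s eq_ab] : qabs a = qabs b.
  by apply: (@qxor_absI _ (qabs x)); rewrite -!qabsM eq_xab.
by move: eq_xab; rewrite eq_ab qmul_sgnr => /esym/sgn_cancel eq_s; rewrite eq_s.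
Qed.

Lemma Rt_inj (n : nat) (x : Q n) : injective (Rt x).
Proof.
move=> a b; rewrite /Rt => eq_abx.
have /qabs_eq_sgn [s eq_ab] : qabs a = qabs b.
  by apply: (@qxor_absI _ (qabs x)); rewrite ![qxor (qabs x) _]qxorC -!qabsM eq_abx.
by move: eq_abx; rewrite eq_ab qmul_sgnl => /esym/sgn_cancel eq_s; rewrite eq_s.
Qed.

Lemma assoc_sign (n : nat) (a x y : Q n) :
  exists s, qmul (qmul a x) y = qsgn s (qmul a (qmul x y)).
Proof. by apply: qabs_eq_sgn; rewrite !qabsM qxorA. Qed.

(* Conjugating the right associator identity yields the left one, with the
   same sign, since each conjugation only contributes a sign. *)
Lemma assoc_sign_rev (n : nat) (s : bool) (a x y : Q n) :
  qmul (qmul a x) y = qsgn s (qmul a (qmul x y)) ->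
  qmul y (qmul x a) = qsgn s (qmul (qmul y x) a).
Proof.
move=> eq_axy; apply: qconj_inj; rewrite qconj_sgn !qconjM.
have [[ea ->] [ex ->]] := (qconj_sgnE a, qconj_sgnE x); have [ey ->] := qconj_sgnE y.
rewrite !(qmul_sgnl, qmul_sgnr) {}eq_axy !qsgnD; congr qsgn.
by case: s; case: ey; case: ea; case: ex.
Qed.

Lemma finv_finE (T : finType) (f : T -> T) (b : T) :
  injective f -> finv_fin f (f b) = b.
Proof.
move=> f_inj; rewrite /finv_fin; case: pickP => [b' /eqP /f_inj //|].
by move/(_ b); rewrite eqxx.
Qed.

Theorem mainTheorem4 (n : nat) (x y : Q n) : Lxy x y =1 Rxy x y.
Proof.
move=> a; rewrite /Lxy /Rxy; have [s eq_R] := assoc_sign a x y.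
have eq_L := assoc_sign_rev eq_R.
have -> : Lt y (Lt x a) = Lt (qmul y x) (qsgn s a) by rewrite /Lt eq_L qmul_sgnr.
have -> : Rt y (Rt x a) = Rt (qmul x y) (qsgn s a) by rewrite /Rt eq_R qmul_sgnl.
by rewrite !finv_finE //; [apply: Rt_inj | apply: Lt_inj].
Qed.
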